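(* For constants $a\in\mathbb{R}$ and $b>0$, define $P_3:\mathbb{R}^m\to\mathbb{R}$ by $P_3(x)=\sqrt{(\|x\|^2+a)^2+b}$. Then $P_3$ is twice differentiable with locally Lipschitz second derivatives and is $L$-curvature bounded for some constant $L$ depending only on $a$ and $b$.
   Context: A function $\phi$ is $L$-curvature bounded if $\phi(x)+\frac L2\|x\|^2$ is convex and $\|\nabla\phi(x)-\nabla\phi(x')\|\le L\|x-x'\|$ for all $x,x'$. *)

(* R^m is modelled as row vectors 'rV[R]_m. *)
From HB Require Import structures.
From mathcomp Require Import all_boot all_order all_algebra.
From mathcomp Require Import all_classical all_reals all_analysis.
Set Implicit Arguments. Unset Strict Implicit. Unset Printing Implicit Defensive.
Import Order.TTheory GRing.Theory Num.Theory.
Import numFieldNormedType.Exports.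
Local Open Scope ring_scope.

Section Defs.
Variable R : realType.

Definition dotv (m : nat) (u v : 'rV[R]_m) : R := \sum_(i < m) u 0 i * v 0 i.
Definition enorm (m : nat) (x : 'rV[R]_m) : R := Num.sqrt (dotv x x).

Definition fnorm (m : nat) (M : 'M[R]_m) : R :=
  Num.sqrt (\sum_(i < m) \sum_(j < m) M i j ^+ 2).

Definition P3 (a b : R) (m : nat) (x : 'rV[R]_m) : R :=
  Num.sqrt ((enorm x ^+ 2 + a) ^+ 2 + b).

(* Gradient: the vector of partial derivatives (meaningful where phi is differentiable). *)
Definition grad (m : nat) (phi : 'rV[R]_m -> R) (x : 'rV[R]_m) : 'rV[R]_m :=
  \row_(i < m) ('d phi x (delta_mx 0 i : 'rV[R]_m)).

Definition hessian (m : nat) (phi : 'rV[R]_m -> R) (x : 'rV[R]_m) : 'M[R]_m :=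
  \matrix_(i < m, j < m) ('d (grad phi) x (delta_mx 0 i : 'rV[R]_m)) 0 j.

Definition convexf (m : nat) (f : 'rV[R]_m -> R) : Prop :=
  forall (x y : 'rV[R]_m) (t : R), 0 <= t <= 1 ->
    f (t *: x + (1 - t) *: y) <= t * f x + (1 - t) * f y.

Definition twice_differentiable (m : nat) (phi : 'rV[R]_m -> R) : Prop :=
  (forall x, differentiable phi x) /\ (forall x, differentiable (grad phi) x).

Definition hessian_locally_lipschitz (m : nat) (phi : 'rV[R]_m -> R) : Prop :=
  forall x0 : 'rV[R]_m, exists r : R, exists K : R, 0 < r /\
    forall x y : 'rV[R]_m, enorm (x - x0) < r -> enorm (y - x0) < r ->
      fnorm (hessian phi x - hessian phi y) <= K * enorm (x - y).

(* phi is L-curvature bounded: phi + L/2 ||x||^2 convex, and grad phi is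
   L-Lipschitz (phi being differentiable everywhere so that grad phi makes sense). *)
Definition curvature_bounded (L : R) (m : nat) (phi : 'rV[R]_m -> R) : Prop :=
  convexf (fun x => phi x + L / 2 * enorm x ^+ 2) /\
  (forall x, differentiable phi x) /\
  (forall x x' : 'rV[R]_m, enorm (grad phi x - grad phi x') <= L * enorm (x - x')).

End Defs.

(* Write [P3 x = S (|x|^2)] with [S t = sqrt ((t + a)^2 + b)].  Since [b > 0],
   [S] is convex with [|S'| <= 1], and [S''], [S'''] are bounded.  The gradient
   is the radial field [x |-> 2 S'(|x|^2) x]; its profile [r |-> 2 r S'(r^2)] has
   a bounded derivative, which makes the field globally Lipschitz.  The Hessian
   [2 S'(|x|^2) I + 4 S''(|x|^2) x x^T] is a combination of bounded Lipschitz
   functions of [|x|^2] and of polynomials in [x], hence locally Lipschitz.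
   Finally [P3 + L/2 |.|^2 = T o |.|^2] with [T t = S t + L t / 2] convex and,
   for [L >= 2], nondecreasing; composed with the convex [|.|^2] it is convex. *)

From HB Require Import structures.
From mathcomp Require Import all_boot all_order all_algebra.
From mathcomp Require Import all_classical all_reals all_analysis.
From mathcomp Require Import ring lra.
Import Order.TTheory GRing.Theory Num.Theory.
Import numFieldNormedType.Exports.
Local Open Scope ring_scope.

Lemma affine_le0 {R : realDomainType} {c0 c1 e p : R} :
  `|p| <= e -> c0 + c1 * e <= 0 -> c0 - c1 * e <= 0 -> c0 + c1 * p <= 0.
Proof. by rewrite ler_norml => /andP[? ?] ? ?; have [?|?] := lerP 0 c1; nra. Qed.

Lemma normr_mulB_le {R : numDomainType} {p1 p2 q1 q2 Bp Bq Lp Lq d : R} :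
  `|p1| <= Bp -> `|q2| <= Bq -> `|p1 - p2| <= Lp * d -> `|q1 - q2| <= Lq * d ->
  `|p1 * q1 - p2 * q2| <= (Bp * Lq + Bq * Lp) * d.
Proof.
move=> hp1 hq2 hp hq.
have -> : p1 * q1 - p2 * q2 = p1 * (q1 - q2) + q2 * (p1 - p2) by ring.
rewrite (le_trans (ler_normD _ _)) // !normrM mulrDl -!mulrA.
by rewrite lerD // ler_pM.
Qed.

Lemma lipschitz_of_derive_le {R : realType} {f df : R -> R} {M : R} :
  (forall x : R, is_derive x 1 f (df x)) -> (forall x, `|df x| <= M) ->
  forall x y, `|f x - f y| <= M * `|x - y|.
Proof.
move=> fd dfM.
suff le_xy x y : x <= y -> `|f x - f y| <= M * `|x - y|.
  move=> x y; have [xy|/ltW yx] := leP x y; first exact: le_xy.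
  by rewrite distrC [`|x - y|]distrC le_xy.
move=> xy; rewrite distrC.
have [c _ ->] : exists2 c, c \in `[x, y]%R & f y - f x = df c * (y - x).
  apply: (MVT_segment xy (fun z _ => fd z)).
  apply/continuous_subspaceT => z.
  by apply/differentiable_continuous/derivable1_diffP; case: (fd z).
by rewrite normrM distrC ler_wpM2r.
Qed.

Section Dotv.
Context {R : realType} {m : nat}.
Implicit Types (x y : 'rV[R]_m).

Lemma dotv_lincomb (A B C D : R) x y :
  dotv (A *: x + B *: y) (C *: x + D *: y) =
  A * C * dotv x x + (A * D + B * C) * dotv x y + B * D * dotv y y.
Proof.
rewrite /dotv !mulr_sumr -!big_split /=; apply: eq_bigr => i _.
by rewrite !mxE; ring.
Qed.

Lemma dotv_ge0 x : 0 <= dotv x x.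
Proof. by rewrite /dotv sumr_ge0 // => i _; rewrite -expr2 sqr_ge0. Qed.

Lemma enorm_ge0 x : 0 <= enorm x.
Proof. exact: sqrtr_ge0. Qed.

Lemma enorm_sqr x : enorm x ^+ 2 = dotv x x.
Proof. by rewrite sqr_sqrtr // dotv_ge0. Qed.

Lemma dotv_sqr_le x y : dotv x y ^+ 2 <= dotv x x * dotv y y.
Proof.
have [yy0|yy_neq0] := eqVneq (dotv y y) 0.
  have y0 i : y 0 i = 0.
    have yy_ge0 j : true -> 0 <= y 0 j * y 0 j by rewrite -expr2 sqr_ge0.
    by apply/eqP; rewrite -sqrf_eq0 expr2 (psumr_eq0P yy_ge0 yy0).
  by rewrite yy0 mulr0 /dotv big1 ?expr0n // => i _; rewrite y0 mulr0.
have yy_gt0 : 0 < dotv y y by rewrite lt0r yy_neq0 dotv_ge0.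
suff : 0 <= dotv y y * (dotv x x * dotv y y - dotv x y ^+ 2).
  by rewrite pmulr_rge0 // subr_ge0.
have := dotv_ge0 (dotv y y *: x + (- dotv x y) *: y).
by rewrite dotv_lincomb; congr (0 <= _); ring.
Qed.

Lemma normr_dotv_le x y : `|dotv x y| <= enorm x * enorm y.
Proof.
rewrite -sqrtr_sqr /enorm -sqrtrM ?dotv_ge0 //.
by rewrite ler_sqrt ?mulr_ge0 ?dotv_ge0 // dotv_sqr_le.
Qed.

Lemma ler_enormD x y : enorm (x + y) <= enorm x + enorm y.
Proof.
have -> : x + y = 1 *: x + 1 *: y by rewrite !scale1r.
rewrite /enorm -[X in _ <= X]ger0_norm ?addr_ge0 ?sqrtr_ge0 // -sqrtr_sqr.
rewrite ler_sqrt ?sqr_ge0 // dotv_lincomb sqrrD !sqr_sqrtr ?dotv_ge0 //.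
have := ler_norm (dotv x y); have := normr_dotv_le x y; rewrite /enorm; lra.
Qed.

Lemma normr_coord_le x (i : 'I_m) : `|x 0 i| <= enorm x.
Proof.
rewrite -sqrtr_sqr /enorm ler_sqrt ?dotv_ge0 // /dotv (bigD1 i) //= -expr2 lerDl.
by rewrite sumr_ge0 // => j _; rewrite -expr2 sqr_ge0.
Qed.

Lemma dotv_delta x (i : 'I_m) : dotv x (delta_mx 0 i) = x 0 i.
Proof.
rewrite /dotv (bigD1 i) //= big1 ?addr0; first by rewrite mxE !eqxx mulr1.
by move=> j ji; rewrite mxE eqxx (negbTE ji) mulr0.
Qed.

Lemma dotv_convex x y (t : R) : 0 <= t <= 1 ->
  dotv (t *: x + (1 - t) *: y) (t *: x + (1 - t) *: y)
    <= t * dotv x x + (1 - t) * dotv y y.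
Proof.
move=> /andP[t_ge0 t_le1]; rewrite dotv_lincomb -subr_ge0.
have := dotv_ge0 (1 *: x + (-1) *: y); rewrite dotv_lincomb => dxy.
set d := (X in 0 <= X) in dxy.
have -> : t * dotv x x + (1 - t) * dotv y y -
   (t * t * dotv x x + (t * (1 - t) + (1 - t) * t) * dotv x y
    + (1 - t) * (1 - t) * dotv y y) = t * (1 - t) * d by rewrite /d; ring.
by rewrite !mulr_ge0 // subr_ge0.
Qed.

Lemma normr_dotv_subr_le x y :
  `|dotv x x - dotv y y| <= (enorm x + enorm y) * enorm (x - y).
Proof.
have -> : dotv x x - dotv y y = dotv (x - y) (x + y).
  have -> : x - y = 1 *: x + (-1) *: y by rewrite scale1r scaleN1r.
  have -> : x + y = 1 *: x + 1 *: y by rewrite !scale1r.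
  by rewrite dotv_lincomb; ring.
by rewrite mulrC (le_trans (normr_dotv_le _ _)) // ler_wpM2l ?enorm_ge0 // ler_enormD.
Qed.

(* [dotv (A x - B y)] exceeds [L^2 dotv (x - y)] by an affine function of
   [dotv x y], which ranges over [[-|x||y|, |x||y|]]; at the two ends the
   inequality is the hypothesis on [A |x| - B |y|] and the trivial bound
   [|A |x| + B |y|| <= L (|x| + |y|)]. *)
Lemma enorm_scaleB_le (L A B : R) x y : `|A| <= L -> `|B| <= L ->
  `|A * enorm x - B * enorm y| <= L * `|enorm x - enorm y| ->
  enorm (A *: x - B *: y) <= L * enorm (x - y).
Proof.
move=> hA hB hAB; have L_ge0 : 0 <= L := le_trans (normr_ge0 _) hA.
have -> : A *: x - B *: y = A *: x + (- B) *: y by rewrite scaleNr.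
have -> : x - y = 1 *: x + (-1) *: y by rewrite scale1r scaleN1r.
rewrite -[L]ger0_norm // /enorm -sqrtr_sqr -sqrtrM ?sqr_ge0 //.
rewrite ler_sqrt ?mulr_ge0 ?sqr_ge0 ?dotv_ge0 // !dotv_lincomb.
rewrite -!enorm_sqr; have ex_ge0 := enorm_ge0 x; have ey_ge0 := enorm_ge0 y.
set ex := enorm x in hAB ex_ge0 *; set ey := enorm y in hAB ey_ge0 *.
have sqr_le (u v : R) : `|u| <= `|v| -> u ^+ 2 <= v ^+ 2.
  by rewrite -(real_normK (num_real u)) -(real_normK (num_real v)) => ?; rewrite lerXn2r.
have hsub : (A * ex - B * ey) ^+ 2 <= (L * (ex - ey)) ^+ 2.
  by apply: sqr_le; rewrite normrM (ger0_norm L_ge0).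
have hadd : (A * ex + B * ey) ^+ 2 <= (L * (ex + ey)) ^+ 2.
  apply: sqr_le; rewrite normrM (ger0_norm L_ge0) ger0_norm ?addr_ge0 //.
  rewrite mulrDr (le_trans (ler_normD _ _)) // !normrM.
  by rewrite (ger0_norm ex_ge0) (ger0_norm ey_ge0) lerD // ler_wpM2r.
pose c0 := A ^+ 2 * ex ^+ 2 + B ^+ 2 * ey ^+ 2 - L ^+ 2 * (ex ^+ 2 + ey ^+ 2).
pose c1 := 2 * (L ^+ 2 - A * B).
rewrite -subr_ge0 (_ : _ - _ = - (c0 + c1 * dotv x y)); last by rewrite /c0 /c1; ring.
rewrite oppr_ge0; apply: affine_le0 (normr_dotv_le x y) _ _; rewrite -/ex -/ey.
  rewrite (_ : _ + _ = (A * ex - B * ey) ^+ 2 - (L * (ex - ey)) ^+ 2) ?subr_le0 //.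
  by rewrite /c0 /c1; ring.
rewrite (_ : _ - _ = (A * ex + B * ey) ^+ 2 - (L * (ex + ey)) ^+ 2) ?subr_le0 //.
by rewrite /c0 /c1; ring.
Qed.

Lemma fnorm_le (M : 'M[R]_m) (c : R) : 0 <= c ->
  (forall i j, `|M i j| <= c) -> fnorm M <= m%:R * c.
Proof.
move=> c_ge0 hM; rewrite /fnorm -[X in _ <= X]ger0_norm ?mulr_ge0 //.
rewrite -sqrtr_sqr ler_sqrt ?sqr_ge0 //.
have -> : (m%:R * c) ^+ 2 = \sum_(i < m) \sum_(j < m) c ^+ 2.
  by rewrite !sumr_const !card_ord -mulrnA -mulr_natr; ring.
apply: ler_sum => i _; apply: ler_sum => j _.
by rewrite -real_normK ?num_real // lerXn2r ?nnegrE.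
Qed.

End Dotv.

Section Differentials.
Context {R : realType} {U V : normedModType R}.

Lemma is_diff_sum {n} {f df : 'I_n -> U -> V} {x} :
  (forall i, is_diff x (f i) (df i)) -> is_diff x (\sum_i f i) (\sum_i df i).
Proof.
by move=> h; elim/big_ind2: _ => // [|? ? ? ? ? ?]; [exact: is_diff_cst|exact: is_diffD].
Qed.

Lemma is_diff_of_derive {f : R -> V} {t : R} {df : V} :
  is_derive t 1 f df -> is_diff t f ( *:%R^~ df).
Proof.
move=> [fd <-]; have d : differentiable f t by apply/derivable1_diffP.
by apply: DiffDef => //; rewrite diff1E // derive1E.
Qed.

Let scale_is_bilinear :
  bilinear_for (GRing.Scale.Law.clone _ _ *:%R _) (GRing.Scale.Law.clone _ _ *:%R _)
    (@GRing.scale R V).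
Proof.
split=> [u a x y|x a u v] /=; first by rewrite scalerDl scalerA.
by rewrite scalerDr !scalerA mulrC.
Qed.

HB.instance Definition _ :=
  bilinear_isBilinear.Build R R V V _ _ (@GRing.scale R V) scale_is_bilinear.

Lemma is_diff_scale (p : R * V) :
  is_diff p (fun q => q.1 *: q.2) (fun q => p.1 *: q.2 + q.1 *: p.2).
Proof.
apply: DiffDef; last by rewrite diff_bilin // => ?; apply: scale_continuous.
by apply: differentiable_bilin => ?; apply: scale_continuous.
Qed.

Lemma is_diffZv {k dk : U -> R} {f df : U -> V} {x} :
  is_diff x k dk -> is_diff x f df ->
  is_diff x (fun z => k z *: f z) (fun v => k x *: df v + dk v *: f x).
Proof.
move=> kx fx.
have -> : (fun z => k z *: f z) = (fun q => q.1 *: q.2) \o (fun y => (k y, f y)) by [].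
apply: is_diff_eq (is_diff_comp (is_diff_pair kx fx) (is_diff_scale _)) _.
by apply/funext => v /=; rewrite addrC.
Qed.

End Differentials.

Lemma is_diff_coord {R : realType} {m n} (M : 'M[R]_(m, n)) i j :
  is_diff M (fun N : 'M[R]_(m, n) => N i j) (fun N => N i j).
Proof.
pose f (N : 'M[R]_(m, n)) := N i j.
have f_lin : linear f by move=> k A B; rewrite /f !mxE.
pose fL : {linear 'M[R]_(m, n) -> R} := HB.pack f (GRing.isLinear.Build _ _ _ _ _ f_lin).
have -> : (fun N : 'M[R]_(m, n) => N i j) = fL by [].
apply: DiffDef; first exact/linear_differentiable/coord_continuous.
by rewrite diff_lin //; exact: coord_continuous.
Qed.

Section Profile.
Context {R : realType}.
Variables (a b : R).
Hypothesis b_gt0 : 0 < b.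

Definition quad (t : R) := (t + a) ^+ 2 + b.
Definition S (t : R) := Num.sqrt (quad t).
Definition S' (t : R) := (t + a) / S t.
Definition S'' (t : R) := b / S t ^+ 3.
Definition S''' (t : R) := - (3 * b * (t + a)) / S t ^+ 5.

Lemma quad_gt0 t : 0 < quad t.
Proof. by rewrite /quad ltr_wpDl ?sqr_ge0. Qed.

Lemma S_gt0 t : 0 < S t.
Proof. by rewrite sqrtr_gt0 quad_gt0. Qed.

Lemma S_sqr t : S t ^+ 2 = quad t.
Proof. by rewrite sqr_sqrtr // ltW // quad_gt0. Qed.

Lemma sqrt_b_le_S t : Num.sqrt b <= S t.
Proof. by rewrite ler_sqrt ?(ltW (quad_gt0 t)) // lerDr sqr_ge0. Qed.

Lemma normr_le_S t : `|t + a| <= S t.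
Proof. by rewrite -sqrtr_sqr ler_sqrt ?(ltW (quad_gt0 t)) // lerDl ltW. Qed.

Lemma is_derive_S (t : R) : is_derive t 1 S (S' t).
Proof.
have dquad : is_derive t 1 quad (2 * (t + a)).
  have -> : quad = (id + cst a) ^+ 2 + cst b by apply/funext.
  by apply: is_derive_eq; rewrite /= !addr0 expr1 [_ *: _]mulr1.
apply: is_derive_eq (is_derive1_comp (is_derive1_sqrt (quad_gt0 t)) dquad) _.
have := S_gt0 t; rewrite /S' /S => S_gt0'.
by field; rewrite gt_eqF.
Qed.

Lemma is_derive_S' (t : R) : is_derive t 1 S' (S'' t).
Proof.
have -> : S' = (fun u => u + a) * (fun u => (S u)^-1) by apply/funext.
have dlin : is_derive t 1 (fun u => u + a) 1.
  by apply: is_derive_eq (is_deriveD (is_derive_id t 1) (is_derive_cst a t 1)) _; rewrite addr0.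
apply: is_derive_eq (is_deriveM dlin (is_deriveV (lt0r_neq0 (S_gt0 t)) (is_derive_S t))) _.
have b_eq : b = S t ^+ 2 - (t + a) ^+ 2 by rewrite S_sqr /quad; ring.
rewrite /S'' /S' {1}b_eq /= [_%:A]mulr1; have := S_gt0 t => ?.
by rewrite /GRing.scale /=; field; rewrite gt_eqF.
Qed.

Lemma is_derive_S'' (t : R) : is_derive t 1 S'' (S''' t).
Proof.
have -> : S'' = cst b * (fun u => ((S ^+ 3) u)^-1) by apply/funext.
have dS3 := is_deriveX 3 (is_derive_S t).
apply: is_derive_eq (is_deriveM (is_derive_cst b t 1)
  (is_deriveV (f := S ^+ 3) (expf_neq0 3 (lt0r_neq0 (S_gt0 t))) dS3)) _.
rewrite /S''' /S' /= !fctE /GRing.scale /=; have := S_gt0 t => ?.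
by field; rewrite gt_eqF.
Qed.

Lemma normr_S'_le1 t : `|S' t| <= 1.
Proof.
rewrite /S' normrM normfV (gtr0_norm (S_gt0 t)) ler_pdivrMr ?S_gt0 // mul1r.
exact: normr_le_S.
Qed.

Lemma S''_ge0 t : 0 <= S'' t.
Proof. by rewrite divr_ge0 ?ltW ?exprn_gt0 ?S_gt0. Qed.

Lemma S''_le t : S'' t <= (Num.sqrt b)^-1.
Proof.
have sqrtb_gt0 : 0 < Num.sqrt b by rewrite sqrtr_gt0.
rewrite /S'' -[b in b / _](sqr_sqrtr (ltW b_gt0)) ler_pdivrMr ?exprn_gt0 ?S_gt0 //.
rewrite -(ler_pM2l sqrtb_gt0) mulVKf ?gt_eqF // -exprS.
by apply: lerXn2r; rewrite ?nnegrE ?sqrtr_ge0 ?(ltW (S_gt0 t)) ?sqrt_b_le_S.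
Qed.

Lemma normr_S'''_le t : `|S''' t| <= 3 / b.
Proof.
have S_gt0t := S_gt0 t; have b_le : b <= S t ^+ 2 by rewrite S_sqr lerDr sqr_ge0.
rewrite /S''' normrM normfV normrN (gtr0_norm (exprn_gt0 5 S_gt0t)) !normrM.
rewrite normr_nat (gtr0_norm b_gt0) ler_pdivrMr ?exprn_gt0 //.
rewrite [X in _ <= X]mulrAC ler_pdivlMr //.
have : b * b * `|t + a| <= S t ^+ 2 * S t ^+ 2 * S t.
  apply: ler_pM; rewrite ?mulr_ge0 ?normr_le_S ?(ltW b_gt0) //.
  by apply: ler_pM; rewrite ?(ltW b_gt0).
rewrite (_ : 3 * b * `|t + a| * b = 3 * (b * b * `|t + a|)); last by ring.
rewrite (_ : S t ^+ 5 = S t ^+ 2 * S t ^+ 2 * S t); last by ring.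
by move=> h; rewrite ler_wpM2l.
Qed.

Lemma S'_lipschitz s t : `|S' s - S' t| <= (Num.sqrt b)^-1 * `|s - t|.
Proof.
apply: lipschitz_of_derive_le => [u|u]; first exact: is_derive_S'.
by rewrite ger0_norm ?S''_ge0 ?S''_le.
Qed.

Lemma S''_lipschitz s t : `|S'' s - S'' t| <= 3 / b * `|s - t|.
Proof. exact: lipschitz_of_derive_le is_derive_S'' normr_S'''_le s t. Qed.

(* The cross term of [(l S s + (1 - l) S t)^2 - quad (l s + (1 - l) t)] is
   nonnegative because [quad s * quad t - ((s + a) (t + a) + b)^2 = b (s - t)^2]. *)
Lemma S_convex s t (l : R) : 0 <= l <= 1 ->
  S (l * s + (1 - l) * t) <= l * S s + (1 - l) * S t.
Proof.
move=> /andP[l_ge0 l_le1]; have Ss := S_gt0 s; have St := S_gt0 t.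
have SS_ge : (s + a) * (t + a) + b <= S s * S t.
  rewrite /S -sqrtrM ?(ltW (quad_gt0 s)) // (le_trans (ler_norm _)) //.
  rewrite -sqrtr_sqr ler_sqrt ?mulr_ge0 ?(ltW (quad_gt0 _)) // -subr_ge0.
  rewrite (_ : _ - _ = b * (s - t) ^+ 2); last by rewrite /quad; ring.
  by rewrite mulr_ge0 ?sqr_ge0 ?(ltW b_gt0).
have rhs_ge0 : 0 <= l * S s + (1 - l) * S t by rewrite addr_ge0 ?mulr_ge0 ?subr_ge0 // ltW.
rewrite -(ger0_norm rhs_ge0) -sqrtr_sqr /S ler_sqrt ?sqr_ge0 // -/(S s) -/(S t).
rewrite -subr_ge0 (_ : _ - _ = l ^+ 2 * (S s ^+ 2 - quad s) + (1 - l) ^+ 2 * (S t ^+ 2 - quad t)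
  + 2 * (l * (1 - l)) * (S s * S t - ((s + a) * (t + a) + b))); last by rewrite /quad; ring.
by rewrite !S_sqr !subrr !mulr0 !add0r !mulr_ge0 ?subr_ge0.
Qed.

Lemma S_addr_nondecr (L : R) s t : 2 <= L -> s <= t -> S s + L / 2 * s <= S t + L / 2 * t.
Proof.
move=> L_ge2 st; have := lipschitz_of_derive_le is_derive_S normr_S'_le1 t s.
have ts_ge0 : 0 <= t - s by rewrite subr_ge0.
rewrite mul1r (ger0_norm ts_ge0) distrC => hS; have := ler_norm (S s - S t).
have : 0 <= (L / 2 - 1) * (t - s) by rewrite mulr_ge0 // subr_ge0 ler_pdivlMr //; lra.
lra.
Qed.

Lemma mulr_S''_le t : 0 <= t -> t * S'' t <= 1 + `|a| / Num.sqrt b.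
Proof.
move=> t_ge0; have S''t := S''_ge0 t.
have t_le : t <= S t + `|a|.
  have := normr_le_S t; have := ler_norm (t + a); have := ler_normr a.
  by have := ler_norm (- a); rewrite normrN; lra.
apply: le_trans (ler_wpM2r S''t t_le) _; rewrite mulrDl lerD ?ler_wpM2l ?S''_le //.
have := S_gt0 t => S_gt0t.
rewrite /S'' (_ : S t * (b / S t ^+ 3) = b / S t ^+ 2); last by field; rewrite gt_eqF.
by rewrite ler_pdivrMr ?exprn_gt0 // mul1r S_sqr lerDr sqr_ge0.
Qed.

(* [gradP3 x = k x *: x] with [k x = 2 S' (|x|^2)], so that [k x * |x| = rho |x|]. *)
Definition rho (r : R) := 2 * r * S' (r ^+ 2).

Lemma is_derive_rho (r : R) :
  is_derive r 1 rho (2 * S' (r ^+ 2) + 4 * (r ^+ 2 * S'' (r ^+ 2))).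
Proof.
have dsqr := is_deriveX 2 (is_derive_id r 1).
have dS'sqr := @is_derive1_comp _ S' (id ^+ 2) r _ _ (is_derive_S' (r ^+ 2)) dsqr.
have -> : rho = (fun x => 2 * x) * (S' \o id ^+ 2) by apply/funext.
apply: is_derive_eq (is_deriveM (is_deriveZ 2 (is_derive_id r 1)) dS'sqr) _.
by rewrite /= /GRing.scale /=; ring.
Qed.

(* [|rho' r| <= 2 |S' (r^2)| + 4 r^2 S'' (r^2) <= 2 + 4 (1 + |a| / sqrt b)]. *)
Definition Lgrad := 6 + 4 * (`|a| / Num.sqrt b).

Lemma Lgrad_ge2 : 2 <= Lgrad.
Proof. by rewrite /Lgrad -lerBlDl; have : 0 <= `|a| / Num.sqrt b by []; lra. Qed.

Lemma rho_lipschitz r s : `|rho r - rho s| <= Lgrad * `|r - s|.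
Proof.
apply: lipschitz_of_derive_le is_derive_rho _ r s => u.
have := mulr_S''_le _ (sqr_ge0 u).
have : 0 <= u ^+ 2 * S'' (u ^+ 2) by rewrite mulr_ge0 ?sqr_ge0 ?S''_ge0.
have /andP[? ?] : -1 <= S' (u ^+ 2) <= 1 by rewrite -ler_norml normr_S'_le1.
have : 0 <= `|a| / Num.sqrt b by [].
by rewrite /Lgrad ler_norml => ? ? ?; apply/andP; split; lra.
Qed.

Section EuclideanSpace.
Variable m : nat.
Local Notation V := 'rV[R]_m.
Local Notation P3 := (P3 a b (m:=m)).

Definition sqnorm (x : V) := dotv x x.
Definition gradP3 (x : V) := (2 * S' (sqnorm x)) *: x.

Lemma P3E : P3 = S \o sqnorm.
Proof. by apply/funext => x; rewrite /P3 /S /quad /= enorm_sqr. Qed.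

Lemma is_diff_sqnorm (x : V) : is_diff x sqnorm (fun v => 2 * dotv x v).
Proof.
have -> : sqnorm = \sum_(i < m) ((fun y : V => y 0 i) * (fun y : V => y 0 i)).
  by apply/funext => y; rewrite /sqnorm /dotv fct_sumE.
apply: is_diff_eq (is_diff_sum (fun i => is_diffM (is_diff_coord x 0 i) (is_diff_coord x 0 i))) _.
apply/funext => v; rewrite fct_sumE /dotv mulr_sumr; apply: eq_bigr => i _.
by rewrite /= !fctE /GRing.scale /=; ring.
Qed.

Lemma is_diff_P3 (x : V) : is_diff x P3 (fun v => 2 * dotv x v * S' (sqnorm x)).
Proof.
rewrite P3E; apply: is_diff_eq (is_diff_comp (is_diff_sqnorm x)
  (is_diff_of_derive (is_derive_S (sqnorm x)))) _.
by apply/funext.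
Qed.

Lemma grad_P3E : grad P3 = gradP3.
Proof.
apply/funext => x; apply/rowP => i; rewrite /grad /gradP3 !mxE.
by case: (is_diff_P3 x) => _ ->; rewrite dotv_delta; ring.
Qed.

Lemma is_diff_gradP3 (x : V) : is_diff x gradP3
  (fun v => (2 * S' (sqnorm x)) *: v + (4 * dotv x v * S'' (sqnorm x)) *: x).
Proof.
have dS' : is_derive (sqnorm x) 1 (2 *: S') (2 *: S'' (sqnorm x)).
  exact: is_deriveZ (is_derive_S' _).
have dk := is_diff_comp (is_diff_sqnorm x) (is_diff_of_derive dS').
rewrite (_ : gradP3 = fun z => ((2 *: S') \o sqnorm) z *: id z) //.
apply: is_diff_eq (is_diffZv dk (is_diff_id x)) _.
by apply/funext => v /=; congr (_ + _); congr (_ *: _); rewrite /GRing.scale /=; ring.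
Qed.

Definition hessP3 (x : V) (i j : 'I_m) :=
  2 * S' (sqnorm x) * (i == j)%:R + 4 * S'' (sqnorm x) * (x 0 i * x 0 j).

Lemma hessian_P3E : hessian P3 = fun x => \matrix_(i, j) hessP3 x i j.
Proof.
apply/funext => x; apply/matrixP => i j; rewrite /hessian !mxE grad_P3E.
case: (is_diff_gradP3 x) => _ ->.
by rewrite /hessP3 !mxE dotv_delta eqxx /= (eq_sym j i); ring.
Qed.

Lemma gradP3_lipschitz (x y : V) : enorm (gradP3 x - gradP3 y) <= Lgrad * enorm (x - y).
Proof.
have k_le z : `|2 * S' (sqnorm z)| <= Lgrad.
  rewrite normrM normr_nat (le_trans _ Lgrad_ge2) // -[X in _ <= X]mulr1.
  by rewrite ler_wpM2l ?normr_S'_le1.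
have rhoE z : 2 * S' (sqnorm z) * enorm z = rho (enorm z).
  by rewrite /rho /sqnorm -enorm_sqr; ring.
by apply: enorm_scaleB_le; rewrite ?k_le // !rhoE rho_lipschitz.
Qed.

Lemma P3_addr_sqr_convex : convexf (fun x : V => P3 x + Lgrad / 2 * enorm x ^+ 2).
Proof.
move=> x y t t01; rewrite P3E /= !enorm_sqr /sqnorm.
apply: le_trans (S_addr_nondecr _ _ _ Lgrad_ge2 (dotv_convex x y t t01)) _.
apply: le_trans (lerD (S_convex _ _ _ t01) (lexx _)) _.
lra.
Qed.

Section Bounded.
Variables (M : R) (x y : V).
Hypotheses (xM : enorm x <= M) (yM : enorm y <= M).

Lemma sqnormB_le : `|sqnorm x - sqnorm y| <= 2 * M * enorm (x - y).
Proof.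
apply: le_trans (normr_dotv_subr_le x y) _.
by apply: ler_wpM2r; [exact: enorm_ge0 | rewrite mulr_natl mulr2n lerD].
Qed.

Lemma S'_sqnormB_le :
  `|S' (sqnorm x) - S' (sqnorm y)| <= 2 * M / Num.sqrt b * enorm (x - y).
Proof.
apply: le_trans (S'_lipschitz _ _) _.
rewrite (_ : 2 * M / _ * _ = (Num.sqrt b)^-1 * (2 * M * enorm (x - y))); last by ring.
by apply: ler_wpM2l; rewrite ?invr_ge0 ?sqrtr_ge0 ?sqnormB_le.
Qed.

Lemma S''_outerB_le i j :
  `|S'' (sqnorm x) * (x 0 i * x 0 j) - S'' (sqnorm y) * (y 0 i * y 0 j)|
    <= (2 * M / Num.sqrt b + 6 * M ^+ 3 / b) * enorm (x - y).
Proof.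
have coord_le (z : V) k : enorm z <= M -> `|z 0 k| <= M.
  by move=> zM; apply: le_trans (normr_coord_le z k) zM.
have coordB_le k : `|x 0 k - y 0 k| <= 1 * enorm (x - y).
  have -> : x 0 k - y 0 k = (x - y) 0 k by rewrite !mxE.
  by rewrite mul1r normr_coord_le.
have S''B_le : `|S'' (sqnorm x) - S'' (sqnorm y)| <= 3 / b * (2 * M) * enorm (x - y).
  rewrite -mulrA; apply: le_trans (S''_lipschitz _ _) _.
  by apply: ler_wpM2l; rewrite ?divr_ge0 ?(ltW b_gt0) ?sqnormB_le.
rewrite (_ : 2 * M / _ + _ = (Num.sqrt b)^-1 * (M * 1 + M * 1) + M * M * (3 / b * (2 * M)));
  last by ring.
apply: normr_mulB_le _ _ S''B_le (normr_mulB_le _ _ (coordB_le i) (coordB_le j)).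
- by rewrite ger0_norm ?S''_ge0 ?S''_le.
- by rewrite normrM ler_pM ?coord_le.
- exact: coord_le.
- exact: coord_le.
Qed.

Lemma hessP3B_le i j : `|hessP3 x i j - hessP3 y i j|
  <= (12 * M / Num.sqrt b + 24 * M ^+ 3 / b) * enorm (x - y).
Proof.
have := S''_outerB_le i j; have := S'_sqnormB_le.
set A := S' (sqnorm x) - S' (sqnorm y); set B := S'' (sqnorm x) * _ - _ => hA hB.
have hA_delta : `|A| * (i == j)%:R <= `|A| by case: (i == j); rewrite ?mulr1 ?mulr0.
have -> : hessP3 x i j - hessP3 y i j = 2 * A * (i == j)%:R + 4 * B.
  by rewrite /hessP3 /A /B; ring.
apply: le_trans (ler_normD _ _) _; rewrite !normrM !normr_nat.
lra.
Qed.

End Bounded.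

Lemma hessian_P3_locally_lipschitz : hessian_locally_lipschitz P3.
Proof.
move=> x0; set M := enorm x0 + 1; set K := 12 * M / Num.sqrt b + 24 * M ^+ 3 / b.
have M_ge0 : 0 <= M by rewrite addr_ge0 ?enorm_ge0.
have K_ge0 : 0 <= K.
  by rewrite addr_ge0 // !mulr_ge0 // ?invr_ge0 ?sqrtr_ge0 ?exprn_ge0 // ltW.
exists 1, (m%:R * K); split => // x y hx hy.
have ball_le z : enorm (z - x0) < 1 -> enorm z <= M.
  move=> hz; rewrite -[z](subrK x0); apply: le_trans (ler_enormD _ _) _; rewrite /M; lra.
rewrite hessian_P3E -mulrA; apply: fnorm_le => [|i j]; first by rewrite mulr_ge0 ?enorm_ge0.
by rewrite !mxE hessP3B_le ?ball_le.
Qed.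

End EuclideanSpace.
End Profile.

Theorem lemma10 (R : realType) (a b : R) (hb : 0 < b) :
  (forall m : nat, twice_differentiable (P3 a b (m:=m)) /\
                   hessian_locally_lipschitz (P3 a b (m:=m))) /\
  exists L : R, forall m : nat, curvature_bounded L (P3 a b (m:=m)).
Proof.
have P3_diff m (x : 'rV[R]_m) : differentiable (P3 a b (m:=m)) x.
  by case: (is_diff_P3 a b hb m x).
split=> [m|].
  split; last exact: hessian_P3_locally_lipschitz a b hb m.
  split=> [|x]; first exact: P3_diff.
  by rewrite (grad_P3E a b hb m); case: (is_diff_gradP3 a b hb m x).
exists (Lgrad a b) => m; split; first exact: P3_addr_sqr_convex a b hb m.
split=> [|x y]; first exact: P3_diff.
by rewrite (grad_P3E a b hb m); exact: gradP3_lipschitz.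
Qed.
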